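(* The set $\mathfrak{C}(X;G)=\{C(Y): Y\subseteq X\}$ of canonical centralisers is a sublattice of the centraliser lattice $\mathfrak{C}(G)$. That is, for all $Y_1,Y_2\subseteq X$, both $C(Y_1)\wedge C(Y_2)=C(Y_1)\cap C(Y_2)$ and $C(Y_1)\vee C(Y_2)$ are of the form $C(Z)$ for some $Z\subseteq X$.
   Context: Let $\Gamma$ be a finite simple undirected graph with vertex set $X$, and let $G=G(\Gamma)=\langle X\mid [x,y]=1 \text{ whenever } x,y \text{ are joined by an edge of }\Gamma\rangle$ be the (free) partially commutative group with commutation graph $\Gamma$. For $S\subseteq G$, $C(S)$ is the centraliser of $S$ in $G$. The centraliser lattice $\mathfrak{C}(G)$ is the set of all centralisers $C(S)$, $S\subseteq G$, ordered by inclusion, with meet $C(M_1)\wedge C(M_2)=C(M_1)\cap C(M_2)=C(M_1\cup M_2)$ and join $C(M_1)\vee C(M_2)$ defined as the intersection of all centralisers containing both $C(M_1)$ and $C(M_2)$. A canonical centraliser is a centraliser $C(Y)$ with $Y\subseteq X$. *)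

(* Partially commutative group G(Gamma) modelled concretely:
   elements are words over X^{+-1}, equality is the congruence generated by
   free cancellation and commutation of letters whose generators are adjacent. *)
From mathcomp Require Import all_boot.
Set Implicit Arguments. Unset Strict Implicit. Unset Printing Implicit Defensive.

Section PCGroup.
Variables (T : finType) (e : rel T).

(* a letter (x, true) is x, (x, false) is x^-1 *)
Definition letter := (T * bool)%type.
Definition word := seq letter.

Inductive pc_step : word -> word -> Prop :=
| pc_red (u v : word) (x : T) (b : bool) :
    pc_step (u ++ (x, b) :: (x, ~~ b) :: v) (u ++ v)
| pc_comm (u v : word) (a c : letter) :
    e a.1 c.1 -> pc_step (u ++ a :: c :: v) (u ++ c :: a :: v).

Inductive pc_eq : word -> word -> Prop :=
| pc_eq_step w1 w2 : pc_step w1 w2 -> pc_eq w1 w2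
| pc_eq_refl w : pc_eq w w
| pc_eq_sym w1 w2 : pc_eq w1 w2 -> pc_eq w2 w1
| pc_eq_trans w1 w2 w3 : pc_eq w1 w2 -> pc_eq w2 w3 -> pc_eq w1 w3.

Definition pc_mul (g h : word) : word := g ++ h.

Definition centraliser (S : word -> Prop) : word -> Prop :=
  fun g => forall s, S s -> pc_eq (pc_mul g s) (pc_mul s g).

Definition is_centraliser (A : word -> Prop) : Prop :=
  exists S : word -> Prop, forall g, A g <-> centraliser S g.

Definition cjoin (A B : word -> Prop) : word -> Prop :=
  fun g => forall C : word -> Prop, is_centraliser C ->
    (forall h, A h -> C h) -> (forall h, B h -> C h) -> C g.

Definition cmeet (A B : word -> Prop) : word -> Prop := fun g => A g /\ B g.

Definition canon (Y : {set T}) : word -> Prop :=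
  centraliser (fun w => exists2 y, y \in Y & w = [:: (y, true)]).

End PCGroup.
Arguments cmeet {T} A B g.
Arguments cjoin {T} e A B g.

(** Letting [G] act on reduced words (no letter cancels against an inverse
    that can be commuted to it) shows that words equal in [G] have reduced
    forms differing only by swaps of adjacent letters. Hence an element
    commuting with a generator [y] is a word over the star of [y]: otherwise,
    for a reduced [r] starting with a letter [a] outside the star, [y r] and
    [r y] would be shuffle-equivalent reduced words in which the letters on
    [y] and [a] occur in different orders. Erasing the letters outside a set
    [A] of generators is a retraction onto the subgroup generated by [A], so
    [C(Y)] is generated by [perp Y], the generators in every star of [Y].
    The meet is [C(Y1 :|: Y2)]. A centraliser [C(S)] above [C(Y1)] and
    [C(Y2)] has [S] inside the subgroups generated by [perp (perp Y1)] and by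
    [perp (perp Y2)], hence, retracting, inside the one generated by
    [W = perp (perp Y1) :&: perp (perp Y2)]; so [C(S)] contains [C(W)],
    which itself contains [C(Y1)] and [C(Y2)] and is therefore the join. *)

From mathcomp Require Import all_boot.
Set Implicit Arguments. Unset Strict Implicit. Unset Printing Implicit Defensive.

Section PartiallyCommutativeGroup.
Variables (T : finType) (e : rel T).
Hypotheses (e_sym : symmetric e) (e_irr : irreflexive e).

Local Notation letter := (T * bool)%type.
Local Notation word := (seq letter).

Definition inv_letter (l : letter) : letter := (l.1, ~~ l.2).

Lemma inv_letterK : involutive inv_letter.
Proof. by case=> x b; rewrite /inv_letter negbK. Qed.

Definition adj (l m : letter) : bool := e l.1 m.1.

Lemma adjC l m : adj l m = adj m l.
Proof. by rewrite /adj e_sym. Qed.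

Lemma adj_invl l m : adj (inv_letter l) m = adj l m. Proof. by []. Qed.
Lemma adj_invr l m : adj l (inv_letter m) = adj l m. Proof. by []. Qed.

Lemma adj_fst_neq l m : adj l m -> l.1 != m.1.
Proof. by apply: contraTneq => eq_lm; rewrite /adj eq_lm e_irr. Qed.

Lemma adj_inv_letter_neq l m : adj l m -> (l == inv_letter m) = false.
Proof. by move/adj_fst_neq; apply: contraNF => /eqP ->. Qed.

Inductive shuffle_step : word -> word -> Prop :=
| ShuffleStep u v a c :
    adj a c -> shuffle_step (u ++ a :: c :: v) (u ++ c :: a :: v).

Inductive shuffle_eq : word -> word -> Prop :=
| shuffle_eq_step w1 w2 : shuffle_step w1 w2 -> shuffle_eq w1 w2
| shuffle_eq_refl w : shuffle_eq w w
| shuffle_eq_sym w1 w2 : shuffle_eq w1 w2 -> shuffle_eq w2 w1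
| shuffle_eq_trans w1 w2 w3 :
    shuffle_eq w1 w2 -> shuffle_eq w2 w3 -> shuffle_eq w1 w3.

Lemma shuffle_eq_cat p q w1 w2 :
  shuffle_eq w1 w2 -> shuffle_eq (p ++ w1 ++ q) (p ++ w2 ++ q).
Proof.
elim=> [x y [u v a c adj_ac]|w|x y _ IH|x y z _ IH1 _ IH2].
- rewrite -!catA /= !(catA p u).
  by apply: shuffle_eq_step; apply: ShuffleStep.
- exact: shuffle_eq_refl.
- exact: shuffle_eq_sym.
- exact: shuffle_eq_trans IH2.
Qed.

Lemma shuffle_eq_catl p w1 w2 : shuffle_eq w1 w2 -> shuffle_eq (p ++ w1) (p ++ w2).
Proof. by move/(shuffle_eq_cat p [::]); rewrite !cats0. Qed.

Lemma shuffle_eq_cons a w1 w2 : shuffle_eq w1 w2 -> shuffle_eq (a :: w1) (a :: w2).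
Proof. exact: (shuffle_eq_catl [:: a]). Qed.

Lemma shuffle_swap a c v : adj a c -> shuffle_eq (a :: c :: v) (c :: a :: v).
Proof. by move=> adj_ac; apply: shuffle_eq_step; apply: (ShuffleStep [::]). Qed.

Lemma shuffle_move l p q : all (adj l) p -> shuffle_eq (l :: p ++ q) (p ++ l :: q).
Proof.
elim: p => [|c p IH] /=; first by move=> _; apply: shuffle_eq_refl.
case/andP=> adj_lc /IH; move/(shuffle_eq_cons c).
exact/shuffle_eq_trans/shuffle_swap.
Qed.

Fixpoint cancel_inv (l : letter) (w : word) : option word :=
  if w is c :: w' then
    if c == inv_letter l then Some w'
    else if adj l c then omap (cons c) (cancel_inv l w') else None
  else None.

Lemma cancel_inv_cat l x y : cancel_inv l (x ++ y) =
  if cancel_inv l x is Some x' then Some (x' ++ y)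
  else if all (adj l) x then omap (cat x) (cancel_inv l y) else None.
Proof.
elim: x => [|c x IH] /=; first by case: (cancel_inv l y).
case: ifP => // _; case: ifP => //= _.
rewrite IH; case: (cancel_inv l x) => //.
by case: (all _ _) => //; case: (cancel_inv l y).
Qed.

Lemma cancel_invP l w w' : cancel_inv l w = Some w' ->
  exists p q, [/\ w = p ++ inv_letter l :: q, all (adj l) p & w' = p ++ q].
Proof.
elim: w w' => [|c w IH] w' //=; case: ifP => [/eqP -> [<-]|_].
  by exists [::], w.
case: ifP => // adj_lc; case E: (cancel_inv l w) => [w1|] //= [<-].
have [p [q [-> all_p ->]]] := IH _ E.
by exists (c :: p), q; rewrite /= adj_lc.
Qed.

Lemma cancel_inv_adj l p : all (adj l) p -> cancel_inv l p = None.
Proof.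
elim: p => [|c p IH] //= /andP[adj_lc /IH ->].
by rewrite adj_lc adj_inv_letter_neq // adjC.
Qed.

Fixpoint reduced (w : word) : bool :=
  if w is a :: w' then (cancel_inv a w' == None) && reduced w' else true.

Lemma reduced_catr x y : reduced (x ++ y) -> reduced y.
Proof. by elim: x => //= a x IH /andP[_ /IH]. Qed.

Lemma reduced_delete p d q : reduced (p ++ d :: q) ->
  all (adj d) p || all (adj d) q -> reduced (p ++ q).
Proof.
elim: p => [|a p IH] /=; first by case/andP.
case/andP=> /eqP red_a red_pq all_d; rewrite IH //; last first.
  by case/orP: all_d => [/andP[_ ->]|->]; rewrite ?orbT.
rewrite andbT; apply/eqP; move: red_a; rewrite !cancel_inv_cat.
case: (cancel_inv a p) => //; case: (all (adj a) p) => //=.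
case: ifP => // _; case adj_ad: (adj a d); first by case: (cancel_inv a q).
move=> _; case E: (cancel_inv a q) => [z|] //=.
have [q1 [q2 [eq_q _ _]]] := cancel_invP E.
have /orP[/andP[adj_da _]|/allP all_q] := all_d.
  by rewrite adjC adj_ad in adj_da.
have := all_q (inv_letter a); rewrite eq_q mem_cat mem_head orbT.
by rewrite adj_invr adjC adj_ad => /(_ isT).
Qed.

Definition mul_letter (l : letter) (w : word) : word :=
  if cancel_inv l w is Some w' then w' else l :: w.

Lemma mul_letter_reduced l w : reduced w -> reduced (mul_letter l w).
Proof.
rewrite /mul_letter; case E: (cancel_inv l w) => [w'|] red_w; last first.
  by rewrite /= E eqxx.
have [p [q [eq_w all_p ->]]] := cancel_invP E.
by apply: (@reduced_delete _ (inv_letter l)); rewrite -?eq_w // all_p.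
Qed.

Lemma cancel_inv_swap l a c v : adj a c ->
  (cancel_inv l (a :: c :: v) = None /\ cancel_inv l (c :: a :: v) = None) \/
  exists s s', [/\ cancel_inv l (a :: c :: v) = Some s,
                   cancel_inv l (c :: a :: v) = Some s' & shuffle_eq s s'].
Proof.
move=> adj_ac /=; have neq_ac := adj_fst_neq adj_ac.
case: (eqVneq a (inv_letter l)) => [eq_a|neq_a].
  have adj_lc : adj l c by rewrite -adj_invl -eq_a.
  rewrite adj_lc adj_inv_letter_neq 1?adjC //.
  by right; exists (c :: v), (c :: v); split => //; apply: shuffle_eq_refl.
case: (eqVneq c (inv_letter l)) => [eq_c|neq_c].
  have -> : adj l a by rewrite -adj_invl -eq_c adjC.
  by right; exists (a :: v), (a :: v); split => //; apply: shuffle_eq_refl.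
case: (adj l a); case: (adj l c) => /=; try by left.
case: (cancel_inv l v) => [s|] /=; last by left.
by right; exists (a :: c :: s), (c :: a :: s); split => //; apply: shuffle_swap.
Qed.

Lemma mul_letter_shuffle l w w' :
  shuffle_eq w w' -> shuffle_eq (mul_letter l w) (mul_letter l w').
Proof.
elim=> [x y [u v a c adj_ac]|w0|x y _ IH|x y z _ IH1 _ IH2].
- rewrite /mul_letter !cancel_inv_cat.
  have swap_uv := shuffle_eq_catl u (shuffle_swap v adj_ac).
  case: (cancel_inv l u) => [u'|]; first exact/shuffle_eq_catl/shuffle_swap.
  case: (all (adj l) u); last exact: shuffle_eq_cons swap_uv.
  case: (cancel_inv_swap l v adj_ac) => [[-> ->]|[s [s' [-> -> eq_s]]]] /=.
    exact: shuffle_eq_cons swap_uv.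
  exact: shuffle_eq_catl.
- exact: shuffle_eq_refl.
- exact: shuffle_eq_sym.
- exact: shuffle_eq_trans IH2.
Qed.

Lemma mul_letterK l w : reduced w ->
  shuffle_eq (mul_letter l (mul_letter (inv_letter l) w)) w.
Proof.
rewrite {2}/mul_letter; case E: (cancel_inv (inv_letter l) w) => [w'|] red_w.
  have [p [q [eq_w all_p ->]]] := cancel_invP E; rewrite inv_letterK in eq_w.
  have red_q : cancel_inv l q = None.
    by move: red_w; rewrite eq_w => /reduced_catr /= /andP[/eqP].
  rewrite /mul_letter cancel_inv_cat cancel_inv_adj // all_p red_q eq_w.
  exact: shuffle_move.
by rewrite /mul_letter /= eqxx; apply: shuffle_eq_refl.
Qed.

Lemma cancel_inv_adj_Some a c w wc wa : adj a c ->
  cancel_inv c w = Some wc -> cancel_inv a w = Some wa ->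
  exists2 x, cancel_inv a wc = Some x & cancel_inv c wa = Some x.
Proof.
move=> adj_ac; elim: w wc wa => [|d w IH] wc wa //=.
case: (eqVneq d (inv_letter c)) => [eq_d|neq_dc].
  move=> [<-]; rewrite eq_d adj_inv_letter_neq ?adj_invl 1?adjC //.
  rewrite adj_invl adjC adj_ac.
  by case: (cancel_inv a w) => [wa'|] //= [<-]; exists wa'; rewrite //= eqxx.
case: ifP => // adj_cd; case Ec: (cancel_inv c w) => [wc'|] //= [<-].
case: (eqVneq d (inv_letter a)) => [eq_d [<-]|neq_da].
  by exists wc'; rewrite //= eq_d eqxx.
case: ifP => // adj_ad; case Ea: (cancel_inv a w) => [wa'|] //= [<-].
have [x Ex1 Ex2] := IH _ _ Ec Ea.
exists (d :: x); first by rewrite /= (negPf neq_da) adj_ad Ex1.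
by rewrite /= (negPf neq_dc) adj_cd Ex2.
Qed.

Lemma cancel_inv_adj_None a c w wc : adj a c ->
  cancel_inv c w = Some wc -> cancel_inv a w = None -> cancel_inv a wc = None.
Proof.
move=> adj_ac; elim: w wc => [|d w IH] wc //=.
case: (eqVneq d (inv_letter c)) => [eq_d|neq_dc].
  move=> [<-]; rewrite eq_d adj_inv_letter_neq ?adj_invl 1?adjC //.
  by rewrite adj_invl adjC adj_ac; case: (cancel_inv a w).
case: ifP => // adj_cd; case Ec: (cancel_inv c w) => [wc'|] //= [<-].
case: (eqVneq d (inv_letter a)) => //= neq_da; rewrite (negPf neq_da).
case: ifP => // adj_ad; case Ea: (cancel_inv a w) => //= _.
by rewrite (IH _ Ec Ea).
Qed.

Lemma mul_letter_adj a c w : adj a c ->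
  shuffle_eq (mul_letter a (mul_letter c w)) (mul_letter c (mul_letter a w)).
Proof.
move=> adj_ac; have adj_ca : adj c a by rewrite adjC.
rewrite /mul_letter.
case Ec: (cancel_inv c w) => [wc|]; case Ea: (cancel_inv a w) => [wa|].
- by have [x -> ->] := cancel_inv_adj_Some adj_ac Ec Ea; apply: shuffle_eq_refl.
- rewrite (cancel_inv_adj_None adj_ac Ec Ea) /= adj_inv_letter_neq //.
  by rewrite adj_ca Ec; apply: shuffle_eq_refl.
- rewrite (cancel_inv_adj_None adj_ca Ea Ec) /= adj_inv_letter_neq //.
  by rewrite adj_ac Ea; apply: shuffle_eq_refl.
- rewrite /= !adj_inv_letter_neq // adj_ac adj_ca Ea Ec.
  exact: shuffle_swap.
Qed.

Lemma pc_eq_cat p q w1 w2 :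
  pc_eq e w1 w2 -> pc_eq e (p ++ w1 ++ q) (p ++ w2 ++ q).
Proof.
elim=> [x y step_xy|w|x y _ IH|x y z _ IH1 _ IH2].
- apply: pc_eq_step; case: step_xy => [u v x0 b|u v a c adj_ac];
    rewrite -!catA /= !(catA p u); [exact: pc_red | exact: pc_comm].
- exact: pc_eq_refl.
- exact: pc_eq_sym.
- exact: pc_eq_trans IH2.
Qed.

Lemma pc_eq_catl p w1 w2 : pc_eq e w1 w2 -> pc_eq e (p ++ w1) (p ++ w2).
Proof. by move/(pc_eq_cat p [::]); rewrite !cats0. Qed.

Lemma pc_eq_catr q w1 w2 : pc_eq e w1 w2 -> pc_eq e (w1 ++ q) (w2 ++ q).
Proof. exact: pc_eq_cat [::] q w1 w2. Qed.

Lemma pc_eq_cons a w1 w2 : pc_eq e w1 w2 -> pc_eq e (a :: w1) (a :: w2).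
Proof. exact: (pc_eq_catl [:: a]). Qed.

Lemma pc_eq_cancel l w : pc_eq e (l :: inv_letter l :: w) w.
Proof. by case: l => x b; apply: pc_eq_step; apply: (pc_red e [::]). Qed.

Lemma pc_eq_cancel_inv l w : pc_eq e (inv_letter l :: l :: w) w.
Proof. by have := pc_eq_cancel (inv_letter l) w; rewrite inv_letterK. Qed.

Lemma shuffle_pc_eq w1 w2 : shuffle_eq w1 w2 -> pc_eq e w1 w2.
Proof.
elim=> [x y [u v a c adj_ac]|w|x y _ IH|x y z _ IH1 _ IH2].
- exact/pc_eq_step/pc_comm.
- exact: pc_eq_refl.
- exact: pc_eq_sym.
- exact: pc_eq_trans IH2.
Qed.

Lemma mul_letterE l w : pc_eq e (mul_letter l w) (l :: w).
Proof.
rewrite /mul_letter; case E: (cancel_inv l w) => [w'|]; last exact: pc_eq_refl.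
have [p [q [-> all_p ->]]] := cancel_invP E.
apply: pc_eq_sym; apply: pc_eq_trans (shuffle_pc_eq (shuffle_move _ all_p)) _.
exact/pc_eq_catl/pc_eq_cancel.
Qed.

Definition mul_word (g w : word) : word := foldr mul_letter w g.

Lemma mul_word_cat u v w : mul_word (u ++ v) w = mul_word u (mul_word v w).
Proof. exact: foldr_cat. Qed.

Lemma mul_word_reduced g w : reduced w -> reduced (mul_word g w).
Proof. by elim: g => //= l g IH /IH; apply: mul_letter_reduced. Qed.

Lemma mul_word_shuffle g w w' :
  shuffle_eq w w' -> shuffle_eq (mul_word g w) (mul_word g w').
Proof. by elim: g => //= l g IH /IH; apply: mul_letter_shuffle. Qed.

Lemma mul_wordE g w : pc_eq e (mul_word g w) (g ++ w).
Proof.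
elim: g => [|l g IH] /=; first exact: pc_eq_refl.
exact: pc_eq_trans (mul_letterE _ _) (pc_eq_cons _ IH).
Qed.

Lemma mul_word_pc_eq g h w : pc_eq e g h -> reduced w ->
  shuffle_eq (mul_word g w) (mul_word h w).
Proof.
move=> eq_gh; elim: eq_gh w => [x y step_xy|x|x y _ IH|x y z _ IH1 _ IH2] w red_w.
- case: step_xy => [u v x0 b|u v a c adj_ac];
    rewrite !mul_word_cat; apply: mul_word_shuffle => /=.
    exact: (mul_letterK (x0, b) (mul_word_reduced v red_w)).
  exact: mul_letter_adj.
- exact: shuffle_eq_refl.
- exact/shuffle_eq_sym/IH.
- exact: shuffle_eq_trans (IH1 _ red_w) (IH2 _ red_w).
Qed.

Definition reduce (g : word) : word := mul_word g [::].

Lemma reduce_reduced g : reduced (reduce g).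
Proof. exact: mul_word_reduced. Qed.

Lemma reduceE g : pc_eq e (reduce g) g.
Proof. by have := mul_wordE g [::]; rewrite cats0. Qed.

Lemma reduce_id r : reduced r -> reduce r = r.
Proof.
elim: r => //= a r IH /andP[/eqP cancel_a /IH].
by rewrite /reduce /= => ->; rewrite /mul_letter cancel_a.
Qed.

Lemma reduced_pc_eq_shuffle r1 r2 :
  reduced r1 -> reduced r2 -> pc_eq e r1 r2 -> shuffle_eq r1 r2.
Proof.
move=> red1 red2 /mul_word_pc_eq.
by rewrite -{2}(reduce_id red1) -{2}(reduce_id red2); apply.
Qed.

Lemma shuffle_eq_filter_pair y v : y != v -> ~~ e y v ->
  forall w w', shuffle_eq w w' ->
  [seq l <- w | (l.1 == y) || (l.1 == v)] =
  [seq l <- w' | (l.1 == y) || (l.1 == v)].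
Proof.
move=> neq_yv nadj_yv w w'.
elim=> [x z [u u' a c adj_ac]|//|x z _ -> //|x z z' _ -> _ -> //].
rewrite !filter_cat /=.
have : ~~ (((a.1 == y) || (a.1 == v)) && ((c.1 == y) || (c.1 == v))).
  apply/negP => /andP[/orP[]/eqP eq_a /orP[]/eqP eq_c]; move: adj_ac;
    by rewrite /adj eq_a eq_c ?e_irr ?(negPf nadj_yv) // e_sym (negPf nadj_yv).
by case: ((a.1 == y) || (a.1 == v)); case: ((c.1 == y) || (c.1 == v)).
Qed.

Definition pc_commute (g s : word) : Prop := pc_eq e (g ++ s) (s ++ g).

Lemma pc_commute_sym g s : pc_commute g s -> pc_commute s g.
Proof. exact: pc_eq_sym. Qed.

Lemma pc_commute_catr g s1 s2 :
  pc_commute g s1 -> pc_commute g s2 -> pc_commute g (s1 ++ s2).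
Proof.
rewrite /pc_commute catA => com1 com2.
apply: pc_eq_trans (pc_eq_catr s2 com1) _.
by rewrite -!catA; apply: pc_eq_catl.
Qed.

Lemma pc_commute_catl g1 g2 s :
  pc_commute g1 s -> pc_commute g2 s -> pc_commute (g1 ++ g2) s.
Proof.
move=> /pc_commute_sym com1 /pc_commute_sym com2.
exact/pc_commute_sym/pc_commute_catr.
Qed.

Lemma pc_commute_eql g g' s : pc_eq e g g' -> pc_commute g s -> pc_commute g' s.
Proof.
move=> eq_g com_g; apply: pc_eq_trans (pc_eq_catr _ (pc_eq_sym eq_g)) _.
exact: pc_eq_trans com_g (pc_eq_catl _ eq_g).
Qed.

Lemma pc_commute_eqr g s s' : pc_eq e s s' -> pc_commute g s -> pc_commute g s'.
Proof.
by move=> eq_s /pc_commute_sym com; apply/pc_commute_sym/(pc_commute_eql eq_s).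
Qed.

Lemma pc_commute_inv g l : pc_commute g [:: l] -> pc_commute g [:: inv_letter l].
Proof.
move=> com; rewrite /pc_commute.
apply: pc_eq_trans (pc_eq_sym (pc_eq_cancel_inv l _)) _.
apply: pc_eq_trans (pc_eq_cons _ (pc_eq_catr _ (pc_eq_sym com))) _.
rewrite -catA; apply/pc_eq_cons.
by have := pc_eq_catl g (pc_eq_cancel l [::]); rewrite cats0.
Qed.

Lemma pc_commute_word g s :
  (forall l, l \in s -> pc_commute g [:: l]) -> pc_commute g s.
Proof.
elim: s => [|l s IH] com_s; first by rewrite /pc_commute cats0; apply: pc_eq_refl.
apply: (@pc_commute_catr _ [:: l]); first exact/com_s/mem_head.
by apply: IH => m s_m; apply/com_s; rewrite inE s_m orbT.
Qed.

Definition star (y x : T) : bool := (x == y) || e x y.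

Lemma pc_commute_letters l m : star m.1 l.1 -> pc_commute [:: l] [:: m].
Proof.
case/orP=> [/eqP|adj_lm]; last exact: pc_eq_step (pc_comm [::] [::] adj_lm).
case: l m => [x b] [_ b'] /= <-.
case: (eqVneq b' b) => [->|/negPf neq_b]; first exact: pc_eq_refl.
have -> : b' = ~~ b by case: b b' neq_b => [] [].
apply: pc_eq_trans (pc_eq_cancel (x, b) [::]) _.
exact/pc_eq_sym/(pc_eq_cancel_inv (x, b) [::]).
Qed.

Lemma not_reduced_rcons r L : reduced r -> ~~ reduced (r ++ [:: L]) ->
  exists p q, r = p ++ inv_letter L :: q /\ all (adj (inv_letter L)) q.
Proof.
elim: r => [|a r IH] //= /andP[/eqP cancel_a red_r]; rewrite negb_and.
case/orP; last by case/(IH red_r) => p [q [-> all_q]]; exists (a :: p), q.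
rewrite cancel_inv_cat cancel_a; case: ifP => //= all_r.
case: ifP => [/eqP eq_L _|_]; last by case: ifP.
by exists [::], r; rewrite eq_L inv_letterK.
Qed.

(** Letters of two non-adjacent generators occur in the same order in
    shuffle-equivalent words, so [y] cannot be moved across a reduced word
    starting with a letter outside its star. *)
Lemma reduced_commute_gen_star y a r :
  reduced (a :: r) -> reduced ((a :: r) ++ [:: (y, true)]) ->
  pc_commute (a :: r) [:: (y, true)] -> star y a.1.
Proof.
move=> red_ar red_ary com; apply: contraT => not_star.
have [neq_ay nadj_ay] : a.1 != y /\ ~~ e a.1 y by apply/norP.
have red_yar : reduced ((y, true) :: a :: r).
  apply/andP; split=> //=.
  have -> : (a == inv_letter (y, true)) = false by apply: contraNF neq_ay => /eqP ->.
  by rewrite /adj /= e_sym (negPf nadj_ay).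
have := reduced_pc_eq_shuffle red_yar red_ary (pc_eq_sym com).
move/(shuffle_eq_filter_pair (y := y) (v := a.1)); rewrite eq_sym neq_ay e_sym.
rewrite /= !eqxx orbT /= => /(_ isT nadj_ay) [/(f_equal fst) /= /eqP].
by rewrite eq_sym (negPf neq_ay).
Qed.

Lemma reduced_commute_gen y n r : size r <= n -> reduced r ->
  pc_commute r [:: (y, true)] ->
  exists2 w, pc_eq e r w & all (fun l => star y l.1) w.
Proof.
elim: n r => [|n IH] r.
  by rewrite leqn0 => /nilP -> _ _; exists [::]; [apply: pc_eq_refl|].
case: r => [|a r] size_r red_ar com; first by exists [::]; [apply: pc_eq_refl|].
rewrite /= ltnS in size_r.
case: (boolP (star y a.1)) => [star_a|not_star].
  have com_r : pc_commute r [:: (y, true)].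
    apply: pc_commute_eql (pc_eq_cancel_inv a r) _.
    exact: pc_commute_catl (@pc_commute_letters (inv_letter a) (y, true) star_a) com.
  have [w eq_rw star_w] := IH r size_r (reduced_catr (x := [:: a]) red_ar) com_r.
  by exists (a :: w); [apply: pc_eq_cons | rewrite /= star_a].
set L := (y, true).
have not_red : ~~ reduced ((a :: r) ++ [:: L]).
  apply: contraNN not_star => red_arL.
  exact: reduced_commute_gen_star red_ar red_arL com.
have [p [q [eq_ar all_q]]] := not_reduced_rcons red_ar not_red.
set r1 := p ++ q.
have red_r1 : reduced r1.
  by apply: (@reduced_delete _ (inv_letter L)); rewrite -?eq_ar // all_q orbT.
have size_r1 : size r1 <= n.
  by move/(f_equal size): eq_ar; rewrite /= !size_cat /= addnS => [[<-]].
have eq_ar_r1 : pc_eq e (a :: r) (r1 ++ [:: inv_letter L]).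
  rewrite eq_ar /r1 -catA; apply/pc_eq_catl/shuffle_pc_eq.
  by have := shuffle_move [::] all_q; rewrite cats0.
have eq_r1 : pc_eq e r1 ((a :: r) ++ [:: L]).
  apply: pc_eq_sym; apply: pc_eq_trans (pc_eq_catr _ eq_ar_r1) _.
  by rewrite -catA; have := pc_eq_catl r1 (pc_eq_cancel_inv L [::]); rewrite cats0.
have com_r1 : pc_commute r1 [:: L].
  apply: pc_commute_eql (pc_eq_sym eq_r1) (pc_commute_catl com _).
  exact: pc_eq_refl.
have [w eq_r1w star_w] := IH r1 size_r1 red_r1 com_r1.
exists (w ++ [:: inv_letter L]); last by rewrite all_cat star_w /= /star eqxx.
exact: pc_eq_trans eq_ar_r1 (pc_eq_catr _ eq_r1w).
Qed.

Lemma pc_commute_gen_star y g : pc_commute g [:: (y, true)] ->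
  exists2 w, pc_eq e g w & all (fun l => star y l.1) w.
Proof.
move=> com; have eq_g := reduceE g.
have com_red := pc_commute_eql (pc_eq_sym eq_g) com.
have [w eq_w star_w] := reduced_commute_gen (leqnn _) (reduce_reduced g) com_red.
by exists w => //; apply: pc_eq_trans (pc_eq_sym eq_g) eq_w.
Qed.

(** Erasing the letters outside [A] is the retraction of [G] onto the
    subgroup generated by [A]: each defining relation either survives the
    erasure or becomes trivial. *)
Definition restrict (A : pred T) (w : word) : word := [seq l <- w | A l.1].

Lemma restrict_pc_eq A w w' :
  pc_eq e w w' -> pc_eq e (restrict A w) (restrict A w').
Proof.
elim=> [x y step_xy|w0|x y _ IH|x y z _ IH1 _ IH2].
- case: step_xy => [u v x0 b|u v a c adj_ac]; rewrite /restrict !filter_cat /=.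
    by case: (A x0); [apply/pc_eq_step/pc_red | apply: pc_eq_refl].
  case: (A a.1); case: (A c.1); try exact: pc_eq_refl.
  exact/pc_eq_step/pc_comm.
- exact: pc_eq_refl.
- exact: pc_eq_sym.
- exact: pc_eq_trans IH2.
Qed.

Lemma restrict_id (A : pred T) w : all (fun l => A l.1) w -> restrict A w = w.
Proof. exact/all_filterP. Qed.

Lemma pc_eq_words_on_meet (A B : pred T) g w1 w2 :
  pc_eq e g w1 -> all (fun l => A l.1) w1 ->
  pc_eq e g w2 -> all (fun l => B l.1) w2 ->
  exists2 w, pc_eq e g w & all (fun l => A l.1 && B l.1) w.
Proof.
move=> eq_w1 A_w1 eq_w2 B_w2; exists (restrict A w2).
  have := restrict_pc_eq A (pc_eq_trans (pc_eq_sym eq_w1) eq_w2).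
  by rewrite (restrict_id A_w1); apply: pc_eq_trans eq_w1.
by apply/allP => l; rewrite mem_filter => /andP[-> /(allP B_w2)].
Qed.

Definition perp (Y : {set T}) : {set T} := [set x | all (star^~ x) (enum Y)].

Lemma perp_star Y x y : x \in perp Y -> y \in Y -> star y x.
Proof. by rewrite inE => /allP star_x Y_y; apply/star_x; rewrite mem_enum. Qed.

Lemma pc_commute_gens_perp (Y : {set T}) g :
  (forall y, y \in Y -> pc_commute g [:: (y, true)]) ->
  exists2 w, pc_eq e g w & all (fun l => l.1 \in perp Y) w.
Proof.
move=> com; suff [w eq_w perp_w] : exists2 w, pc_eq e g w &
    all (fun l => all (star^~ l.1) (enum Y)) w.
  by exists w => //; apply/allP => l /(allP perp_w); rewrite inE.
have {}com y : y \in enum Y -> pc_commute g [:: (y, true)].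
  by rewrite mem_enum; apply: com.
elim: (enum Y) com => [|y s IH] com.
  by exists g; [apply: pc_eq_refl | apply/allP].
have [w1 eq_w1 star_w1] := IH (fun z s_z => com z (mem_behead (s := y :: s) s_z)).
have [w2 eq_w2 star_w2] := pc_commute_gen_star (com y (mem_head y s)).
have [w eq_w meet_w] :=
  pc_eq_words_on_meet (A := fun x => all (star^~ x) s) eq_w1 star_w1 eq_w2 star_w2.
by exists w => //; apply/allP => l /(allP meet_w) /= /andP[-> ->].
Qed.

Lemma canonP (Z : {set T}) g :
  canon e Z g <-> forall z, z \in Z -> pc_commute g [:: (z, true)].
Proof. by split=> [com z Z_z | com _ [z Z_z ->]]; apply: com => //; exists z. Qed.

Lemma pc_commute_gens_word (Z : {set T}) g w :
  canon e Z g -> all (fun l => l.1 \in Z) w -> pc_commute g w.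
Proof.
move=> /canonP com /allP Z_w; apply: pc_commute_word => [[x b]] /Z_w /= /com.
by case: b => // /pc_commute_inv.
Qed.

Lemma perp_canon (Y : {set T}) x : x \in perp Y -> canon e Y [:: (x, true)].
Proof.
move=> perp_x; apply/canonP => y Y_y; apply: pc_commute_letters.
exact: perp_star perp_x Y_y.
Qed.

Lemma canon_perp_perpS (Y Z : {set T}) g : Z \subset perp (perp Y) ->
  canon e Y g -> canon e Z g.
Proof.
move=> /subsetP sub_Z /canonP com; apply/canonP => z Z_z.
have [w eq_w perp_w] := pc_commute_gens_perp com.
apply: pc_commute_eql (pc_eq_sym eq_w) _; apply: pc_commute_sym.
apply: pc_commute_word => l /(allP perp_w) perp_l; apply: pc_commute_letters.
exact: perp_star (sub_Z _ Z_z) perp_l.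
Qed.

(** The generators in [perp Y] lie in [C(Y)], so they commute with [S]. *)
Lemma centraliser_canon_sup (Y : {set T}) (C S : word -> Prop) s :
    (forall g, C g <-> centraliser e S g) -> (forall g, canon e Y g -> C g) ->
  S s ->
  exists2 w, pc_eq e s w & all (fun l => l.1 \in perp (perp Y)) w.
Proof.
move=> defC sub_C S_s; apply: pc_commute_gens_perp => x perp_x.
exact/pc_commute_sym/((defC _).1 (sub_C _ (perp_canon perp_x)) s S_s).
Qed.

Lemma cmeet_canon (Y1 Y2 : {set T}) g :
  cmeet (canon e Y1) (canon e Y2) g <-> canon e (Y1 :|: Y2) g.
Proof.
rewrite /cmeet; split=> [[/canonP com1 /canonP com2] | /canonP com].
  by apply/canonP => z; rewrite inE => /orP[/com1|/com2].
by split; apply/canonP => z Y_z; apply: com; rewrite inE Y_z ?orbT.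
Qed.

Lemma cjoin_canon (Y1 Y2 : {set T}) g :
  cjoin e (canon e Y1) (canon e Y2) g <->
  canon e (perp (perp Y1) :&: perp (perp Y2)) g.
Proof.
set W := perp (perp Y1) :&: perp (perp Y2); split.
  move/(_ (canon e W)); apply.
  - by exists (fun w => exists2 y, y \in W & w = [:: (y, true)]).
  - by move=> h; apply: canon_perp_perpS; rewrite subsetIl.
  - by move=> h; apply: canon_perp_perpS; rewrite subsetIr.
move=> canon_g C [S defC] sub1 sub2; apply/defC => s S_s.
have [w1 eq_w1 perp_w1] := centraliser_canon_sup defC sub1 S_s.
have [w2 eq_w2 perp_w2] := centraliser_canon_sup defC sub2 S_s.
have [w eq_w W_w] := pc_eq_words_on_meet eq_w1 perp_w1 eq_w2 perp_w2.
apply: pc_commute_eqr (pc_eq_sym eq_w) (pc_commute_gens_word canon_g _).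
by apply/allP => l /(allP W_w); rewrite inE.
Qed.

End PartiallyCommutativeGroup.

Theorem lemma3p1 (T : finType) (e : rel T)
  (e_sym : symmetric e) (e_irr : irreflexive e) (Y1 Y2 : {set T}) :
  (exists Z : {set T}, forall g,
      cmeet (canon e Y1) (canon e Y2) g <-> canon e Z g) /\
  (exists Z : {set T}, forall g,
      cjoin e (canon e Y1) (canon e Y2) g <-> canon e Z g).
Proof.
split; eexists => g; [exact: cmeet_canon | exact: cjoin_canon].
Qed.
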